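(* Let $A,B\in\mathfrak{J}_n$ be nonempty with $B\subset A$, let $x^*\in\mathbb{R}$, and suppose $\mu(\Omega_{A,B,x^*})=0$. Then the function $h(x)=\mu\big(xA\,\widetilde\oplus\,(1-x)B\big)$, $x\in\mathbb{R}$, is continuous at $x^*$.
   Context: $\mu$ is $n$-dimensional Lebesgue measure. $\operatorname{ci}(A)$ is the closure of the interior of $A$. $\mathfrak{J}_n$ is the family of bounded sets $A\subset\mathbb{R}^n$ with $A=\operatorname{ci}(A)$ and $\mu(\partial A)=0$. For nonempty bounded $A$, $d_S(p,A)=d(p,\partial A)$ if $p\in A$ and $d_S(p,A)=-d(p,\partial A)$ if $p\notin A$, with $d(q,E)=\min_{e\in E}\|q-e\|$. For nonempty $A,B\in\mathfrak{J}_n$, $x\in\mathbb{R}$: $f_{A,B,x}(p)=x\,d_S(p,A)+(1-x)\,d_S(p,B)$, the distance average is $xA\,\widetilde\oplus\,(1-x)B=\{p: f_{A,B,x}(p)\ge0\}$, and $\Omega_{A,B,x}=\{p: f_{A,B,x}(p)=0\}$. *)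

(* Lebesgue measure is defined
   as Lebesgue outer measure (infimum of total volumes of countable covers
   by closed boxes); all sets to which it is applied in the statement are
   closed, hence Borel, so this agrees with Lebesgue measure. *)
From Stdlib Require Import Reals Lra Classical ClassicalEpsilon.
From Stdlib Require Vectors.Fin.
Open Scope R_scope.

Definition vec (n : nat) : Type := Fin.t n -> R.

Fixpoint fsum (n : nat) : (Fin.t n -> R) -> R :=
  match n with
  | O => fun _ => 0
  | S m => fun f => f Fin.F1 + fsum m (fun i => f (Fin.FS i))
  end.

Fixpoint fprod (n : nat) : (Fin.t n -> R) -> R :=
  match n with
  | O => fun _ => 1
  | S m => fun f => f Fin.F1 * fprod m (fun i => f (Fin.FS i))
  end.

Definition vnorm {n : nat} (p : vec n) : R := sqrt (fsum n (fun i => (p i) ^ 2)).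
Definition vdist {n : nat} (p q : vec n) : R := vnorm (fun i => p i - q i).

Definition set (n : nat) : Type := vec n -> Prop.

Definition interior {n : nat} (A : set n) : set n :=
  fun p => exists r, 0 < r /\ forall q, vdist p q < r -> A q.
Definition closure {n : nat} (A : set n) : set n :=
  fun p => forall r, 0 < r -> exists q, A q /\ vdist p q < r.
Definition boundary {n : nat} (A : set n) : set n :=
  fun p => closure A p /\ ~ interior A p.
Definition ci {n : nat} (A : set n) : set n := closure (interior A).

Definition bounded {n : nat} (A : set n) : Prop :=
  exists M, forall p, A p -> vnorm p <= M.
Definition nonempty {n : nat} (A : set n) : Prop := exists p, A p.

(* d(q,E) = min_{e in E} ||q - e|| (the minimum, chosen by epsilon;
   it exists whenever E is nonempty and closed, e.g. E = boundary A). *)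
Definition is_min_dist {n : nat} (q : vec n) (E : set n) (d : R) : Prop :=
  (exists e, E e /\ vdist q e = d) /\ (forall e, E e -> d <= vdist q e).
Definition dist_set {n : nat} (q : vec n) (E : set n) : R :=
  epsilon (inhabits 0) (fun d => is_min_dist q E d).

Definition dS {n : nat} (p : vec n) (A : set n) : R :=
  epsilon (inhabits 0)
    (fun d => (A p -> d = dist_set p (boundary A)) /\
              (~ A p -> d = - dist_set p (boundary A))).

Definition in_box {n : nat} (a b : vec n) : set n :=
  fun p => forall i, a i <= p i <= b i.
Definition box_vol {n : nat} (a b : vec n) : R :=
  fprod n (fun i => Rmax 0 (b i - a i)).

Definition cover_sum {n : nat} (E : set n) (s : R) : Prop :=
  exists (a b : nat -> vec n),
    (forall p, E p -> exists k, in_box (a k) (b k) p) /\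
    infinite_sum (fun k => box_vol (a k) (b k)) s.

Definition is_glb (S : R -> Prop) (m : R) : Prop :=
  (forall s, S s -> m <= s) /\ (forall m', (forall s, S s -> m' <= s) -> m' <= m).

Definition mu {n : nat} (E : set n) : R :=
  epsilon (inhabits 0) (fun m => is_glb (cover_sum E) m).

Definition in_Jn {n : nat} (A : set n) : Prop :=
  bounded A /\ (forall p, A p <-> ci A p) /\ mu (boundary A) = 0.

Definition f_ABx {n : nat} (A B : set n) (x : R) (p : vec n) : R :=
  x * dS p A + (1 - x) * dS p B.

Definition dist_avg {n : nat} (A B : set n) (x : R) : set n :=
  fun p => 0 <= f_ABx A B x p.

Definition Omega {n : nat} (A B : set n) (x : R) : set n :=
  fun p => f_ABx A B x p = 0.

(** The signed distances are continuous (sets of J_n are closed), so [f] is jointly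
   continuous in [(x, p)], and [{f x >= 0}] stays in a fixed ball for [x] near [xs].
   Hence limits of points of [{f x >= 0}], [x -> xs], lie in [{f xs >= 0}]; covering
   the latter by open boxes of volume close to its measure, a compactness argument
   ([mu_limsup]) puts [{f x >= 0}] inside the same cover: [h] is upper semicontinuous.
   Symmetrically, the points of [{f xs >= 0}] lost at [x] accumulate only on
   [Omega A B xs], a null set, and subadditivity gives lower semicontinuity. *)

From Stdlib Require Import Reals Lra Lia Classical ClassicalEpsilon FunctionalExtensionality.
From Stdlib Require Vectors.Fin.
(* imported last so that [interior] and [bounded] refer to the definitions of Defs,
   not to their namesakes in Stdlib's Rtopology *)
From Pilot Require Import Defs.
Open Scope R_scope.

Lemma Rabs_le_between (x c : R) : Rabs x <= c -> - c <= x <= c.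
Proof. unfold Rabs; destruct Rcase_abs; lra. Qed.

Lemma Rabs_mult_le (a b c d : R) : Rabs a <= c -> Rabs b <= d -> Rabs (a * b) <= c * d.
Proof. intros; rewrite Rabs_mult; apply Rmult_le_compat; auto; apply Rabs_pos. Qed.

(** ** Finite sums and products indexed by [Fin.t n] *)

Lemma fsum_ext n (f g : Fin.t n -> R) : (forall i, f i = g i) -> fsum n f = fsum n g.
Proof.
  revert f g; induction n as [|n IH]; intros f g H; simpl; auto.
  rewrite H, (IH _ (fun i => g (Fin.FS i))); auto.
Qed.

Lemma fsum_plus n (f g : Fin.t n -> R) :
  fsum n (fun i => f i + g i) = fsum n f + fsum n g.
Proof. revert f g; induction n as [|n IH]; intros f g; simpl; [lra | rewrite IH; lra]. Qed.

Lemma fsum_scal n c (f : Fin.t n -> R) : fsum n (fun i => c * f i) = c * fsum n f.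
Proof. revert f; induction n as [|n IH]; intros f; simpl; [lra | rewrite IH; lra]. Qed.

Lemma fsum_const n c : fsum n (fun _ => c) = INR n * c.
Proof. induction n as [|n IH]; [simpl; lra | cbn [fsum]; rewrite IH, S_INR; lra]. Qed.

Lemma fsum_le n (f g : Fin.t n -> R) : (forall i, f i <= g i) -> fsum n f <= fsum n g.
Proof.
  revert f g; induction n as [|n IH]; intros f g H; simpl; [lra|].
  pose proof (H Fin.F1); pose proof (IH (fun i => f (Fin.FS i)) (fun i => g (Fin.FS i)) (fun i => H _)).
  lra.
Qed.

Lemma fsum_nonneg n (f : Fin.t n -> R) : (forall i, 0 <= f i) -> 0 <= fsum n f.
Proof.
  intros H; pose proof (fsum_le n (fun _ => 0) f H) as Hle.
  rewrite fsum_const, Rmult_0_r in Hle; exact Hle.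
Qed.

Lemma fsum_ge_term n (f : Fin.t n -> R) : (forall i, 0 <= f i) -> forall i, f i <= fsum n f.
Proof.
  revert f; induction n as [|n IH]; intros f H i.
  - exact (Fin.case0 (fun i => f i <= fsum 0 f) i).
  - apply (Fin.caseS' i (fun i => f i <= fsum (S n) f)); simpl.
    + pose proof (fsum_nonneg n (fun i => f (Fin.FS i)) (fun i => H _)); lra.
    + intros j; pose proof (IH (fun i => f (Fin.FS i)) (fun i => H _) j); pose proof (H Fin.F1); lra.
Qed.

Lemma fprod_nonneg n (f : Fin.t n -> R) : (forall i, 0 <= f i) -> 0 <= fprod n f.
Proof.
  revert f; induction n as [|n IH]; intros f H; simpl; [lra|].
  apply Rmult_le_pos; auto.
Qed.

Lemma fprod_le n (f g : Fin.t n -> R) : (forall i, 0 <= f i <= g i) -> fprod n f <= fprod n g.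
Proof.
  revert f g; induction n as [|n IH]; intros f g H; simpl; [lra|].
  pose proof (H Fin.F1).
  pose proof (IH (fun i => f (Fin.FS i)) (fun i => g (Fin.FS i)) (fun i => H _)).
  pose proof (fprod_nonneg n (fun i => f (Fin.FS i)) (fun i => proj1 (H _))).
  nra.
Qed.

Lemma fprod_shift_continuous n (d : Fin.t n -> R) :
  continuity_pt (fun t => fprod n (fun i => d i + t)) 0.
Proof.
  revert d; induction n as [|n IH]; intros d; simpl.
  - apply continuity_pt_const; intros ? ?; reflexivity.
  - apply (continuity_pt_mult (fun t => d Fin.F1 + t) (fun t => fprod n (fun i => d (Fin.FS i) + t))).
    + apply (continuity_pt_plus (fun _ => d Fin.F1) (fun t => t)).
      * apply continuity_pt_const; intros ? ?; reflexivity.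
      * apply derivable_continuous_pt, derivable_pt_id.
    + apply (IH (fun i => d (Fin.FS i))).
Qed.

(** ** The Euclidean norm and distance on [vec n] *)

Lemma vnorm_ge0 n (v : vec n) : 0 <= vnorm v.
Proof. apply sqrt_pos. Qed.

Lemma vnorm_ext n (u v : vec n) : (forall i, u i = v i) -> vnorm u = vnorm v.
Proof. intros H; unfold vnorm; f_equal; apply fsum_ext; intros i; rewrite H; reflexivity. Qed.

Lemma fsum_sq_nonneg n (v : vec n) : 0 <= fsum n (fun i => v i ^ 2).
Proof. apply fsum_nonneg; intros; apply pow2_ge_0. Qed.

Lemma vnorm_zero n (v : vec n) : (forall i, v i = 0) -> vnorm v = 0.
Proof.
  intros H; unfold vnorm.
  rewrite (fsum_ext n _ (fun _ => 0)) by (intros i; rewrite H; ring).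
  rewrite fsum_const, Rmult_0_r; apply sqrt_0.
Qed.

Lemma vnorm_scal n c (v : vec n) : vnorm (fun i => c * v i) = Rabs c * vnorm v.
Proof.
  unfold vnorm; rewrite (fsum_ext n _ (fun i => c ^ 2 * v i ^ 2)) by (intros; ring).
  rewrite fsum_scal, sqrt_mult by (apply pow2_ge_0 || apply fsum_sq_nonneg).
  rewrite <- Rsqr_pow2, sqrt_Rsqr_abs; reflexivity.
Qed.

Lemma coord_le n (v : vec n) i : Rabs (v i) <= vnorm v.
Proof.
  rewrite <- sqrt_Rsqr_abs; unfold vnorm; apply sqrt_le_1_alt.
  rewrite Rsqr_pow2; apply (fsum_ge_term n (fun i => v i ^ 2)); intros; apply pow2_ge_0.
Qed.

Lemma vnorm_bound n (v : vec n) c : 0 <= c -> (forall i, Rabs (v i) <= c) -> vnorm v <= sqrt (INR n) * c.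
Proof.
  intros Hc H; unfold vnorm.
  rewrite <- (sqrt_pow2 c Hc), <- sqrt_mult by (apply pos_INR || apply pow2_ge_0).
  apply sqrt_le_1_alt; rewrite <- fsum_const; apply fsum_le; intros i.
  rewrite <- (pow2_abs (v i)); pose proof (H i); pose proof (Rabs_pos (v i)); nra.
Qed.

Lemma cauchy_schwarz n (u v : vec n) :
  (fsum n (fun i => u i * v i)) ^ 2 <= fsum n (fun i => u i ^ 2) * fsum n (fun i => v i ^ 2).
Proof.
  revert u v; induction n as [|n IH]; intros u v; [simpl; lra|]; cbn [fsum].
  pose proof (IH (fun i => u (Fin.FS i)) (fun i => v (Fin.FS i))) as Htail.
  pose proof (fsum_sq_nonneg n (fun i => u (Fin.FS i))).
  pose proof (fsum_sq_nonneg n (fun i => v (Fin.FS i))).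
  set (S := fsum n (fun i => u (Fin.FS i) * v (Fin.FS i))) in *.
  set (U := fsum n (fun i => u (Fin.FS i) ^ 2)) in *.
  set (V := fsum n (fun i => v (Fin.FS i) ^ 2)) in *.
  set (a := u Fin.F1); set (b := v Fin.F1).
  (* the cross term: 2abS <= a^2 V + b^2 U, by AM-GM and the induction hypothesis *)
  assert (Hcross : 2 * a * b * S <= a ^ 2 * V + b ^ 2 * U).
  { assert (Hsq : (2 * a * b * S) ^ 2 <= (a ^ 2 * V + b ^ 2 * U) ^ 2).
    { pose proof (pow2_ge_0 (a ^ 2 * V - b ^ 2 * U)).
      assert (0 <= a ^ 2 * b ^ 2) by (pose proof (pow2_ge_0 (a * b)); nra).
      nra. }
    assert (0 <= a ^ 2 * V + b ^ 2 * U) by (pose proof (pow2_ge_0 a); pose proof (pow2_ge_0 b); nra).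
    nra. }
  replace ((a * b + S) ^ 2) with (a ^ 2 * b ^ 2 + 2 * a * b * S + S ^ 2) by ring.
  replace ((a ^ 2 + U) * (b ^ 2 + V)) with (a ^ 2 * b ^ 2 + (a ^ 2 * V + b ^ 2 * U) + U * V) by ring.
  lra.
Qed.

Lemma vnorm_triangle n (u v : vec n) : vnorm (fun i => u i + v i) <= vnorm u + vnorm v.
Proof.
  unfold vnorm.
  set (U := fsum n (fun i => u i ^ 2)); set (V := fsum n (fun i => v i ^ 2)).
  assert (HU : 0 <= U) by apply fsum_sq_nonneg; assert (HV : 0 <= V) by apply fsum_sq_nonneg.
  rewrite (fsum_ext n _ (fun i => u i ^ 2 + (2 * (u i * v i) + v i ^ 2))) by (intros; ring).
  rewrite fsum_plus, fsum_plus, fsum_scal; fold U V.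
  assert (HS : fsum n (fun i => u i * v i) <= sqrt U * sqrt V).
  { pose proof (cauchy_schwarz n u v) as Hcs; fold U V in Hcs.
    rewrite <- sqrt_mult by auto.
    apply Rsqr_incr_0_var; [|apply sqrt_pos].
    rewrite Rsqr_sqrt by nra; rewrite Rsqr_pow2; exact Hcs. }
  pose proof (sqrt_pos U); pose proof (sqrt_pos V).
  rewrite <- (sqrt_Rsqr (sqrt U + sqrt V)) by lra.
  apply sqrt_le_1_alt; unfold Rsqr.
  pose proof (sqrt_sqrt U HU); pose proof (sqrt_sqrt V HV); nra.
Qed.

Lemma vdist_refl n (p : vec n) : vdist p p = 0.
Proof. apply vnorm_zero; intros; ring. Qed.

Lemma vdist_ge0 n (p q : vec n) : 0 <= vdist p q.
Proof. apply vnorm_ge0. Qed.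

Lemma vdist_sym n (p q : vec n) : vdist p q = vdist q p.
Proof.
  unfold vdist; rewrite (vnorm_ext n (fun i => q i - p i) (fun i => -1 * (p i - q i))) by (intros; ring).
  rewrite vnorm_scal, Rabs_left by lra; ring.
Qed.

Lemma vdist_triangle n (p q r : vec n) : vdist p r <= vdist p q + vdist q r.
Proof.
  unfold vdist; rewrite (vnorm_ext n (fun i => p i - r i) (fun i => (p i - q i) + (q i - r i))) by (intros; ring).
  apply vnorm_triangle.
Qed.

Lemma vnorm_as_dist n (p : vec n) : vnorm p = vdist p (fun _ => 0).
Proof. apply vnorm_ext; intros; ring. Qed.

Lemma vnorm_le_dist n (p q : vec n) : vnorm p <= vdist p q + vnorm q.
Proof. rewrite !vnorm_as_dist; apply vdist_triangle. Qed.

Lemma vdist_le_norm n (p q : vec n) : vdist p q <= vnorm p + vnorm q.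
Proof. rewrite !vnorm_as_dist, (vdist_sym n q); apply vdist_triangle. Qed.

Lemma coord_dist n (p q : vec n) i : Rabs (p i - q i) <= vdist p q.
Proof. apply (coord_le n (fun i => p i - q i)). Qed.

(** ** Series with nonnegative terms *)

Lemma partial_sums_mono (h : nat -> R) : (forall k, 0 <= h k) ->
  forall N M, (N <= M)%nat -> sum_f_R0 h N <= sum_f_R0 h M.
Proof. intros H N M HNM; induction HNM as [|m _ IH]; simpl; [lra | pose proof (H (S m)); lra]. Qed.

Lemma partial_le_sum (h : nat -> R) s : (forall k, 0 <= h k) -> infinite_sum h s ->
  forall N, sum_f_R0 h N <= s.
Proof.
  intros Hh Hs N; apply Rnot_lt_le; intros Hlt.
  destruct (Hs (sum_f_R0 h N - s)) as [M HM]; [lra|].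
  specialize (HM (max N M) ltac:(lia)); unfold Rdist in HM; apply Rabs_def2 in HM.
  pose proof (partial_sums_mono h Hh N (max N M) ltac:(lia)); lra.
Qed.

Lemma infinite_sum_nonneg (h : nat -> R) s : (forall k, 0 <= h k) -> infinite_sum h s -> 0 <= s.
Proof. intros Hh Hs; pose proof (partial_le_sum h s Hh Hs 0); pose proof (Hh 0%nat); simpl in *; lra. Qed.

Lemma series_bounded (h : nat -> R) Bd : (forall k, 0 <= h k) -> (forall N, sum_f_R0 h N <= Bd) ->
  exists L, infinite_sum h L /\ L <= Bd.
Proof.
  intros Hh HB; destruct (growing_cv (sum_f_R0 h)) as [L HL].
  - intros N; simpl; pose proof (Hh (S N)); lra.
  - exists Bd; intros x [N ->]; apply HB.
  - exists L; split; [exact HL|]; apply Rnot_lt_le; intros Hlt.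
    destruct (HL (L - Bd)) as [M HM]; [lra|].
    specialize (HM M (le_n _)); specialize (HB M); unfold Rdist in HM; apply Rabs_def2 in HM; lra.
Qed.

Lemma infinite_sum_ext (f g : nat -> R) s : (forall k, f k = g k) -> infinite_sum f s -> infinite_sum g s.
Proof.
  intros E H eps He; destruct (H eps He) as [N HN]; exists N; intros m Hm.
  rewrite <- (sum_eq f g m) by auto; auto.
Qed.

Lemma geom_pos k : 0 < (/ 2) ^ k.
Proof. apply pow_lt; lra. Qed.

Lemma geom_partial_sum eps N : sum_f_R0 (fun k => eps * (/ 2) ^ S k) N = eps - eps * (/ 2) ^ S N.
Proof.
  induction N as [|N IH]; [simpl; field|].
  cbn [sum_f_R0]; rewrite IH; simpl; field.
Qed.

Definition interleave {T : Type} (f g : nat -> T) (k : nat) : T :=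
  if Nat.even k then f (Nat.div2 k) else g (Nat.div2 k).

Lemma interleave_even T (f g : nat -> T) k : interleave f g (2 * k) = f k.
Proof. unfold interleave; rewrite Nat.even_even, Nat.div2_double; reflexivity. Qed.

Lemma interleave_odd T (f g : nat -> T) k : interleave f g (S (2 * k)) = g k.
Proof.
  unfold interleave; replace (S (2 * k)) with (2 * k + 1)%nat by lia.
  rewrite Nat.even_odd; replace (2 * k + 1)%nat with (S (2 * k)) by lia.
  rewrite Nat.div2_succ_double; reflexivity.
Qed.

Lemma interleave_partial_sum (f g : nat -> R) N :
  sum_f_R0 (interleave f g) (S (2 * N)) = sum_f_R0 f N + sum_f_R0 g N.
Proof.
  induction N as [|N IH]; [unfold interleave; simpl; ring|].
  replace (S (2 * S N)) with (S (S (S (2 * N)))) by lia.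
  rewrite tech5, tech5, IH, !tech5; replace (S (S (2 * N))) with (2 * S N)%nat by lia.
  rewrite interleave_even, interleave_odd; ring.
Qed.

(** ** Box covers and the outer measure [mu] *)

Lemma box_vol_nonneg n (a b : vec n) : 0 <= box_vol a b.
Proof. apply fprod_nonneg; intros; apply Rmax_l. Qed.

Lemma cover_sum_nonneg n (E : set n) s : cover_sum E s -> 0 <= s.
Proof. intros [a [b [_ Hs]]]; exact (infinite_sum_nonneg _ s (fun k => box_vol_nonneg n _ _) Hs). Qed.

Lemma cover_sum_mono n (E F : set n) s : (forall p, E p -> F p) -> cover_sum F s -> cover_sum E s.
Proof. intros HEF [a [b [Hc Hs]]]; exists a, b; split; auto. Qed.

Lemma glb_exists (S : R -> Prop) : (exists s, S s) -> (forall s, S s -> 0 <= s) -> exists m, is_glb S m.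
Proof.
  intros [s0 Hs0] Hpos; destruct (completeness (fun y => S (- y))) as [l [Hub Hlub]].
  - exists 0; intros y Hy; pose proof (Hpos _ Hy); lra.
  - exists (- s0); rewrite Ropp_involutive; exact Hs0.
  - exists (- l); split.
    + intros s Hs; assert (- s <= l) by (apply Hub; rewrite Ropp_involutive; exact Hs); lra.
    + intros m' Hm'; assert (l <= - m') by (apply Hlub; intros y Hy; pose proof (Hm' _ Hy); lra); lra.
Qed.

Lemma glb_approx (S : R -> Prop) m : is_glb S m -> forall eps, 0 < eps -> exists s, S s /\ s < m + eps.
Proof.
  intros [_ Hglb] eps Heps; apply NNPP; intros Hno.
  assert (m + eps <= m); [|lra].
  apply Hglb; intros s Hs; apply Rnot_lt_le; intros Hlt; apply Hno; eauto.
Qed.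

Lemma mu_spec n (E : set n) : (exists s, cover_sum E s) -> is_glb (cover_sum E) (mu E).
Proof. intros H; unfold mu; apply epsilon_spec, glb_exists; auto; apply cover_sum_nonneg. Qed.

Lemma mu_le_cover n (E : set n) s : cover_sum E s -> mu E <= s.
Proof. intros H; exact (proj1 (mu_spec n E (ex_intro _ s H)) s H). Qed.

Lemma mu_approx n (E : set n) : (exists s, cover_sum E s) -> forall eps, 0 < eps ->
  exists s, cover_sum E s /\ s < mu E + eps.
Proof. intros H; apply glb_approx, mu_spec, H. Qed.

Lemma bounded_has_cover n (E : set n) Rb : (1 <= n)%nat -> (forall p, E p -> vnorm p <= Rb) ->
  exists s, cover_sum E s.
Proof.
  intros Hn HE.
  set (a := fun k : nat => match k with O => fun _ : Fin.t n => - Rb | _ => fun _ => 0 end).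
  set (b := fun k : nat => match k with O => fun _ : Fin.t n => Rb | _ => fun _ => 0 end).
  assert (Hdeg : forall k, (0 < k)%nat -> box_vol (a k) (b k) = 0).
  { intros [|k] Hk; [lia|]; destruct n as [|n]; [lia|].
    unfold box_vol; simpl; rewrite Rminus_diag, Rmax_left by lra; ring. }
  exists (box_vol (a 0%nat) (b 0%nat)), a, b; split.
  - intros p Hp; exists 0%nat; intros i; apply Rabs_le_between.
    pose proof (coord_le n p i); pose proof (HE p Hp); simpl; lra.
  - intros eps Heps; exists 0%nat; intros N _.
    replace (sum_f_R0 _ N) with (box_vol (a 0%nat) (b 0%nat)).
    + unfold Rdist; rewrite Rminus_diag, Rabs_R0; exact Heps.
    + induction N as [|N IH]; [reflexivity|]; rewrite tech5, <- IH, (Hdeg (S N)) by lia; ring.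
Qed.

Lemma box_enlarge_vol n (a b : vec n) eps : 0 < eps ->
  exists eta, 0 < eta /\ box_vol (fun i => a i - eta) (fun i => b i + eta) <= box_vol a b + eps.
Proof.
  intros Heps; set (d := fun i => Rmax 0 (b i - a i)).
  destruct (fprod_shift_continuous n d eps Heps) as [alp [Halp Hclose]].
  exists (alp / 4); split; [lra|].
  assert (Hd : fprod n (fun i => d i + 0) = box_vol a b).
  { unfold box_vol, d; f_equal; apply functional_extensionality; intros i; ring. }
  assert (Hnear : fprod n (fun i => d i + alp / 2) <= box_vol a b + eps).
  { specialize (Hclose (alp / 2)); simpl in Hclose; unfold R_dist in Hclose; rewrite Hd in Hclose.
    assert (H : Rabs (fprod n (fun i => d i + alp / 2) - box_vol a b) < eps).
    { apply Hclose; split; [unfold D_x, no_cond; split; [exact I | lra] |].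
      rewrite Rminus_0_r, Rabs_right; lra. }
    apply Rabs_def2 in H; lra. }
  eapply Rle_trans; [|exact Hnear].
  unfold box_vol; apply fprod_le; intros i; split; [apply Rmax_l|].
  unfold d, Rmax; repeat destruct Rle_dec; lra.
Qed.

(* Every countable box cover can be enlarged to a cover by strictly larger boxes
   at an arbitrarily small extra cost ([eps / 2^(k+1)] for the [k]-th box). *)
Lemma cover_enlarge n (a b : nat -> vec n) s eps :
  infinite_sum (fun k => box_vol (a k) (b k)) s -> 0 < eps ->
  exists (a' b' : nat -> vec n) L, (forall k i, a' k i < a k i /\ b k i < b' k i) /\
    infinite_sum (fun k => box_vol (a' k) (b' k)) L /\ L <= s + eps.
Proof.
  intros Hs Heps.
  assert (Hk : forall k, exists eta, 0 < eta /\
    box_vol (fun i => a k i - eta) (fun i => b k i + eta) <= box_vol (a k) (b k) + eps * (/ 2) ^ S k).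
  { intros k; apply box_enlarge_vol; pose proof (geom_pos (S k)); nra. }
  destruct (choice _ Hk) as [eta Heta].
  set (a' := fun k i => a k i - eta k); set (b' := fun k i => b k i + eta k).
  destruct (series_bounded (fun k => box_vol (a' k) (b' k)) (s + eps)) as [L [HL HLle]].
  - intros; apply box_vol_nonneg.
  - intros N; apply Rle_trans with (sum_f_R0 (fun k => box_vol (a k) (b k)) N + sum_f_R0 (fun k => eps * (/ 2) ^ S k) N).
    + rewrite <- plus_sum; apply sum_Rle; intros k _; apply Heta.
    + rewrite geom_partial_sum.
      pose proof (partial_le_sum _ s (fun k => box_vol_nonneg n (a k) (b k)) Hs N).
      pose proof (geom_pos (S N)); nra.
  - exists a', b', L; repeat split; auto; unfold a', b'; pose proof (proj1 (Heta k)); lra.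
Qed.

Definition in_open_box {n : nat} (a b : vec n) : set n := fun p => forall i, a i < p i < b i.

Lemma mu_open_approx n (E : set n) : (exists s, cover_sum E s) -> forall eps, 0 < eps ->
  exists (a b : nat -> vec n) s, (forall p, E p -> exists k, in_open_box (a k) (b k) p) /\
    infinite_sum (fun k => box_vol (a k) (b k)) s /\ s <= mu E + eps.
Proof.
  intros HE eps Heps.
  destruct (mu_approx n E HE (eps / 2) ltac:(lra)) as [s [[a [b [Hcov Hs]]] Hlt]].
  destruct (cover_enlarge n a b s (eps / 2) Hs ltac:(lra)) as [a' [b' [L [Hab [HL HLle]]]]].
  exists a', b', L; repeat split; auto; [|lra].
  intros p Hp; destruct (Hcov p Hp) as [k Hk]; exists k; intros i.
  specialize (Hk i); specialize (Hab k i); lra.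
Qed.

Lemma cover_union n (E : set n) (a1 b1 a2 b2 : nat -> vec n) s1 s2 :
  (forall p, E p -> (exists k, in_box (a1 k) (b1 k) p) \/ (exists k, in_box (a2 k) (b2 k) p)) ->
  infinite_sum (fun k => box_vol (a1 k) (b1 k)) s1 -> infinite_sum (fun k => box_vol (a2 k) (b2 k)) s2 ->
  exists L, cover_sum E L /\ L <= s1 + s2.
Proof.
  intros HE H1 H2.
  set (h := interleave (fun k => box_vol (a1 k) (b1 k)) (fun k => box_vol (a2 k) (b2 k))).
  assert (Hh : forall k, 0 <= h k) by (intros k; unfold h, interleave; destruct (Nat.even k); apply box_vol_nonneg).
  destruct (series_bounded h (s1 + s2) Hh) as [L [HL HLle]].
  { intros N; apply Rle_trans with (sum_f_R0 h (S (2 * N))); [apply partial_sums_mono; auto; lia|].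
    unfold h; rewrite interleave_partial_sum.
    pose proof (partial_le_sum _ s1 (fun k => box_vol_nonneg n (a1 k) (b1 k)) H1 N).
    pose proof (partial_le_sum _ s2 (fun k => box_vol_nonneg n (a2 k) (b2 k)) H2 N); lra. }
  exists L; split; auto; exists (interleave a1 a2), (interleave b1 b2); split.
  - intros p Hp; destruct (HE p Hp) as [[k Hk]|[k Hk]].
    + exists (2 * k)%nat; rewrite !interleave_even; exact Hk.
    + exists (S (2 * k)); rewrite !interleave_odd; exact Hk.
  - apply (infinite_sum_ext h); auto.
    intros k; unfold h, interleave; destruct (Nat.even k); reflexivity.
Qed.

Lemma mu_subadditive n (E E1 E2 : set n) :
  (exists s, cover_sum E1 s) -> (exists s, cover_sum E2 s) ->
  (forall p, E p -> E1 p \/ E2 p) -> mu E <= mu E1 + mu E2.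
Proof.
  intros HE1 HE2 HE; apply Rle_plus_epsilon; intros eps Heps.
  destruct (mu_approx n E1 HE1 (eps / 2) ltac:(lra)) as [s1 [[a1 [b1 [Hc1 Hs1]]] Hlt1]].
  destruct (mu_approx n E2 HE2 (eps / 2) ltac:(lra)) as [s2 [[a2 [b2 [Hc2 Hs2]]] Hlt2]].
  destruct (cover_union n E a1 b1 a2 b2 s1 s2) as [L [HL HLle]]; auto.
  - intros p Hp; destruct (HE p Hp); [left | right]; auto.
  - pose proof (mu_le_cover n E L HL); lra.
Qed.

(** ** Sequential compactness of bounded sets of [vec n] *)

Definition strictly_increasing (phi : nat -> nat) : Prop := forall k, (phi k < phi (S k))%nat.

Lemma strictly_increasing_ge phi : strictly_increasing phi -> forall k, (k <= phi k)%nat.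
Proof. intros H k; induction k as [|k IH]; [lia | specialize (H k); lia]. Qed.

Lemma strictly_increasing_mono phi : strictly_increasing phi -> forall j k, (j <= k)%nat -> (phi j <= phi k)%nat.
Proof. intros H j k Hjk; induction Hjk as [|m _ IH]; [lia | specialize (H m); lia]. Qed.

Lemma inv_succ_small eta : 0 < eta -> exists N, forall j, (N <= j)%nat -> / (INR j + 1) < eta.
Proof.
  intros He; destruct (archimed_cor1 eta He) as [N [HN HN0]]; exists N; intros j Hj.
  apply le_INR in Hj; apply lt_INR in HN0; simpl in HN0.
  eapply Rle_lt_trans; [|exact HN]; apply Rinv_le_contravar; lra.
Qed.

Lemma bolzano_weierstrass_subseq (w : nat -> R) Rb : (forall k, Rabs (w k) <= Rb) ->
  exists psi l, strictly_increasing psi /\ Un_cv (fun k => w (psi k)) l.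
Proof.
  intros Hw.
  destruct (Bolzano_Weierstrass w (fun c => - Rb <= c <= Rb) (compact_P3 (- Rb) Rb)) as [l Hl].
  { intros k; apply Rabs_le_between, Hw. }
  (* [g (N, j)] is an index beyond [N] where [w] is within [1/(j+1)] of [l] *)
  assert (Hg : forall Nj : nat * nat, exists k, (fst Nj <= k)%nat /\ Rabs (w k - l) < / (INR (snd Nj) + 1)).
  { intros [N j]; simpl.
    assert (Hpos : 0 < / (INR j + 1)) by (apply Rinv_0_lt_compat; pose proof (pos_INR j); lra).
    apply (Hl (disc l (mkposreal _ Hpos)) N).
    exists (mkposreal _ Hpos); intros y Hy; exact Hy. }
  destruct (choice _ Hg) as [g Hgs].
  set (psi := fix psi (j : nat) : nat :=
         match j with O => g (0, 0)%nat | S j' => g (S (psi j'), S j') end).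
  assert (Hpsi : forall j, Rabs (w (psi j) - l) < / (INR j + 1)).
  { intros [|j]; [apply (Hgs (0, 0)%nat) | apply (Hgs (S (psi j), S j))]. }
  exists psi, l; split.
  - intros k; exact (proj1 (Hgs (S (psi k), S k))).
  - intros eta He; destruct (inv_succ_small eta He) as [N HN]; exists N; intros k Hk.
    eapply Rlt_trans; [apply Hpsi | apply HN; exact Hk].
Qed.

(* Bolzano-Weierstrass in [vec n], coordinatewise, by extracting subsequences one coordinate at a time. *)
Lemma bolzano_weierstrass_vec n (u : nat -> vec n) Rb : (forall k i, Rabs (u k i) <= Rb) ->
  exists phi (p : vec n), strictly_increasing phi /\
    forall eta, 0 < eta -> exists N, forall k, (N <= k)%nat -> forall i, Rabs (u (phi k) i - p i) < eta.
Proof.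
  revert u; induction n as [|n IH]; intros u Hu.
  - exists (fun k => k), (fun _ => 0); split; [intros k; lia|].
    intros eta He; exists 0%nat; intros k _ i; exact (Fin.case0 (fun i => Rabs (u k i - 0) < eta) i).
  - destruct (IH (fun k i => u k (Fin.FS i)) (fun k i => Hu k (Fin.FS i))) as [phi [p [Hphi Htail]]].
    destruct (bolzano_weierstrass_subseq (fun k => u (phi k) Fin.F1) Rb (fun k => Hu _ _)) as [psi [l [Hpsi Hhead]]].
    exists (fun k => phi (psi k)), (fun i => Fin.caseS' i (fun _ => R) l p); split.
    + intros k; pose proof (strictly_increasing_mono phi Hphi (S (psi k)) (psi (S k)) (Hpsi k)).
      specialize (Hphi (psi k)); lia.
    + intros eta He; destruct (Htail eta He) as [N1 HN1]; destruct (Hhead eta He) as [N2 HN2].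
      exists (max N1 N2); intros k Hk i.
      apply (Fin.caseS' i (fun i => Rabs (u (phi (psi k)) i - Fin.caseS' i (fun _ => R) l p) < eta)); simpl.
      * apply HN2; lia.
      * intros j; apply HN1; pose proof (strictly_increasing_ge psi Hpsi k); lia.
Qed.

Lemma bounded_cluster_point n (u : nat -> vec n) Rb : (forall k, vnorm (u k) <= Rb) ->
  exists p, forall eta, 0 < eta -> forall N, exists k, (N <= k)%nat /\ vdist p (u k) < eta.
Proof.
  intros Hu; destruct (bolzano_weierstrass_vec n u Rb) as [phi [p [Hphi Hconv]]].
  { intros k i; eapply Rle_trans; [apply coord_le | apply Hu]. }
  exists p; intros eta He N.
  pose proof (sqrt_pos (INR n)) as Hsq.
  set (c := eta / (sqrt (INR n) + 1)).
  assert (Hc : 0 < c) by (apply Rdiv_lt_0_compat; lra).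
  assert (Hsc : sqrt (INR n) * c < eta).
  { unfold c; apply (Rmult_lt_reg_r (sqrt (INR n) + 1)); [lra|].
    field_simplify; [nra | lra]. }
  destruct (Hconv c Hc) as [N0 HN0]; exists (phi (max N N0)); split.
  - pose proof (strictly_increasing_ge phi Hphi (max N N0)); lia.
  - eapply Rle_lt_trans; [|exact Hsc]; apply vnorm_bound; [lra|].
    intros i; rewrite Rabs_minus_sym; left; apply HN0; lia.
Qed.

(** ** Closed sets, boundaries and distance to a set *)

Definition is_closed {n : nat} (E : set n) : Prop :=
  forall e, (forall r, 0 < r -> exists q, E q /\ vdist e q < r) -> E e.

Lemma sub_closure n (A : set n) p : A p -> closure A p.
Proof. intros Hp r Hr; exists p; rewrite vdist_refl; auto. Qed.

Lemma ci_complement_open n (A : set n) : (forall p, A p <-> ci A p) ->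
  forall p, ~ A p -> exists r, 0 < r /\ forall q, vdist p q < r -> ~ A q.
Proof.
  intros HA p Hp; rewrite HA in Hp; unfold ci, closure in Hp.
  apply not_all_ex_not in Hp; destruct Hp as [r Hr].
  apply imply_to_and in Hr; destruct Hr as [Hr Hfar].
  exists (r / 2); split; [lra|]; intros q Hq Aq.
  rewrite HA in Aq; destruct (Aq (r / 2) ltac:(lra)) as [q' [Hq' Hqq']].
  apply Hfar; exists q'; split; auto; pose proof (vdist_triangle n p q q'); lra.
Qed.

Lemma boundary_closed n (A : set n) : is_closed (boundary A).
Proof.
  intros e H; split.
  - intros r Hr; destruct (H (r / 2) ltac:(lra)) as [q [[Hq _] Heq]].
    destruct (Hq (r / 2) ltac:(lra)) as [q' [Hq' Hqq']].
    exists q'; split; auto; pose proof (vdist_triangle n e q q'); lra.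
  - intros [r [Hr Hball]]; destruct (H (r / 2) ltac:(lra)) as [q [[_ Hq] Heq]].
    apply Hq; exists (r / 2); split; [lra|]; intros q' Hq'.
    apply Hball; pose proof (vdist_triangle n e q q'); lra.
Qed.

Lemma closure_bounded n (A : set n) M : (forall p, A p -> vnorm p <= M) ->
  forall p, closure A p -> vnorm p <= M.
Proof.
  intros HM p Hp; apply Rnot_lt_le; intros Hlt.
  destruct (Hp (vnorm p - M) ltac:(lra)) as [q [Hq Hpq]].
  pose proof (HM q Hq); pose proof (vnorm_le_dist n p q); lra.
Qed.

Lemma segment_dist n (p0 q0 : vec n) t t' :
  vdist (fun i => p0 i + t * (q0 i - p0 i)) (fun i => p0 i + t' * (q0 i - p0 i)) = Rabs (t - t') * vdist q0 p0.
Proof. unfold vdist; rewrite <- vnorm_scal; apply vnorm_ext; intros; ring. Qed.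

Lemma segment_close n (p0 q0 : vec n) t t' r : 0 < r -> Rabs (t - t') < r / (vdist q0 p0 + 1) ->
  vdist (fun i => p0 i + t * (q0 i - p0 i)) (fun i => p0 i + t' * (q0 i - p0 i)) < r.
Proof.
  intros Hr Ht; rewrite segment_dist; pose proof (vdist_ge0 n q0 p0); pose proof (Rabs_pos (t - t')).
  apply (Rmult_lt_compat_r (vdist q0 p0 + 1)) in Ht; [|lra].
  replace (r / (vdist q0 p0 + 1) * (vdist q0 p0 + 1)) with r in Ht by (field; lra); nra.
Qed.

(* A segment from a point of [A] to a point outside [A] meets the boundary of [A]:
   the last parameter [ts] at which the segment is in [A] gives a boundary point. *)
Lemma segment_meets_boundary n (A : set n) p0 q0 : A p0 -> ~ A q0 -> exists e, boundary A e.
Proof.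
  intros Hp0 Hq0.
  set (s := fun t => fun i => p0 i + t * (q0 i - p0 i)).
  assert (Hs0 : s 0 = p0) by (apply functional_extensionality; intros; unfold s; ring).
  assert (Hs1 : s 1 = q0) by (apply functional_extensionality; intros; unfold s; ring).
  set (S := fun t => 0 <= t <= 1 /\ A (s t)).
  destruct (completeness S) as [ts [Hub Hlub]].
  { exists 1; intros t [Ht _]; lra. }
  { exists 0; split; [lra | rewrite Hs0; exact Hp0]. }
  assert (Hts : 0 <= ts <= 1).
  { split; [apply Hub; split; [lra | rewrite Hs0; exact Hp0] | apply Hlub; intros t [Ht _]; lra]. }
  set (L := vdist q0 p0); assert (HL : 0 <= L) by apply vdist_ge0.
  exists (s ts); split.
  - (* parameters of [S] approach [ts] from below *)
    intros r Hr; set (d := r / (L + 1)); assert (Hd : 0 < d) by (apply Rdiv_lt_0_compat; lra).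
    destruct (classic (exists t, S t /\ ts - d < t)) as [[t [Ht Htd]]|Hno].
    + exists (s t); split; [apply Ht|]; apply segment_close; auto.
      pose proof (Hub t Ht); rewrite Rabs_right by lra; fold L; unfold d in Htd; lra.
    + assert (ts <= ts - d); [|lra].
      apply Hlub; intros t Ht; apply Rnot_lt_le; intros Hlt; apply Hno; eauto.
  - (* a ball around [s ts] inside [A] would push the parameter beyond [ts] *)
    intros [r [Hr Hball]].
    set (t := Rmin 1 (ts + r / (L + 1) / 2)).
    assert (Hrl : 0 < r / (L + 1)) by (apply Rdiv_lt_0_compat; lra).
    assert (Ht : ts <= t <= ts + r / (L + 1) / 2) by (split; [apply Rmin_glb|apply Rmin_r]; lra).
    assert (HSt : S t).
    { split; [split; [lra | apply Rmin_l]|]; apply Hball; apply segment_close; auto.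
      rewrite Rabs_left1 by lra; fold L; lra. }
    assert (Hteq : t = ts) by (pose proof (Hub t HSt); lra).
    assert (Ht1 : t = 1) by (unfold t in Hteq |- *; unfold Rmin in *; destruct Rle_dec; lra).
    apply Hq0; rewrite <- Hs1, <- Ht1; exact (proj2 HSt).
Qed.

Lemma boundary_nonempty n (A : set n) M : (1 <= n)%nat -> nonempty A ->
  (forall p, A p -> vnorm p <= M) -> exists e, boundary A e.
Proof.
  intros Hn [p0 Hp0] HM; apply (segment_meets_boundary n A p0 (fun _ => M + 1) Hp0).
  intros Hq; pose proof (HM _ Hq); pose proof (HM p0 Hp0); pose proof (vnorm_ge0 n p0).
  destruct n as [|n]; [lia|].
  pose proof (coord_le (S n) (fun _ => M + 1) Fin.F1); rewrite Rabs_right in * by lra; lra.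
Qed.

Lemma dist_attained n (E : set n) M : is_closed E -> (forall e, E e -> vnorm e <= M) -> (exists e, E e) ->
  forall p, is_min_dist p E (dist_set p E).
Proof.
  intros HE HM [e0 He0] p; unfold dist_set; apply epsilon_spec.
  set (D := fun d => exists e, E e /\ d = vdist p e).
  destruct (glb_exists D) as [d0 Hd0].
  { exists (vdist p e0); exists e0; auto. }
  { intros s [e [_ ->]]; apply vdist_ge0. }
  (* a minimizing sequence, and a cluster point of it *)
  assert (Hk : forall k : nat, exists e, E e /\ vdist p e < d0 + / (INR k + 1)).
  { intros k; assert (Hpos : 0 < / (INR k + 1)) by (apply Rinv_0_lt_compat; pose proof (pos_INR k); lra).
    destruct (glb_approx D d0 Hd0 _ Hpos) as [s [[e [He ->]] Hlt]]; eauto. }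
  destruct (choice _ Hk) as [u Hu].
  destruct (bounded_cluster_point n u M) as [e He]; [intros k; apply HM, Hu|].
  assert (HEe : E e).
  { apply HE; intros r Hr; destruct (He r Hr 0%nat) as [k [_ Hk2]]; exists (u k); split; auto; apply Hu. }
  assert (Hle : vdist p e <= d0).
  { apply Rle_plus_epsilon; intros eta Heta.
    destruct (inv_succ_small (eta / 2) ltac:(lra)) as [N HN].
    destruct (He (eta / 2) ltac:(lra) N) as [k [Hk1 Hk2]].
    pose proof (proj2 (Hu k)); pose proof (HN k Hk1).
    pose proof (vdist_triangle n p (u k) e); rewrite (vdist_sym n (u k) e) in *; lra. }
  exists d0; split.
  - exists e; split; auto; apply Rle_antisym; auto; apply (proj1 Hd0); exists e; auto.
  - intros e' He'; apply (proj1 Hd0); exists e'; auto.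
Qed.

Section DistanceToSet.
Variable n : nat.
Variable E : set n.
Hypothesis Hmin : forall p, is_min_dist p E (dist_set p E).

Lemma dist_nonneg p : 0 <= dist_set p E.
Proof. destruct (Hmin p) as [[e [_ He]] _]; rewrite <- He; apply vdist_ge0. Qed.

Lemma dist_zero p : E p -> dist_set p E = 0.
Proof.
  intros Hp; pose proof (dist_nonneg p); pose proof (proj2 (Hmin p) p Hp).
  rewrite vdist_refl in *; lra.
Qed.

Lemma dist_lipschitz p q : dist_set q E <= dist_set p E + vdist p q.
Proof.
  destruct (Hmin p) as [[e [He Hpe]] _]; pose proof (proj2 (Hmin q) e He).
  pose proof (vdist_triangle n q p e); rewrite (vdist_sym n q p) in *; lra.
Qed.

Lemma dist_lipschitz_abs p q : Rabs (dist_set q E - dist_set p E) <= vdist p q.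
Proof.
  pose proof (dist_lipschitz p q); pose proof (dist_lipschitz q p) as Hqp.
  rewrite (vdist_sym n q p) in Hqp; apply Rabs_le; lra.
Qed.

Variable M : R.
Hypothesis HM : forall e, E e -> vnorm e <= M.

Lemma dist_bounds p : vnorm p - M <= dist_set p E <= vnorm p + M.
Proof.
  destruct (Hmin p) as [[e [He Hpe]] _]; rewrite <- Hpe; pose proof (HM e He).
  pose proof (vdist_le_norm n p e); pose proof (vnorm_le_dist n p e); lra.
Qed.
End DistanceToSet.

(** ** The signed distance [dS] *)

Lemma dS_in n (A : set n) p : A p -> dS p A = dist_set p (boundary A).
Proof.
  intros Hp; unfold dS; apply (epsilon_spec (inhabits 0) (fun d => (A p -> d = _) /\ (~ A p -> d = _))); auto.
  exists (dist_set p (boundary A)); split; [auto | intros; contradiction].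
Qed.

Lemma dS_out n (A : set n) p : ~ A p -> dS p A = - dist_set p (boundary A).
Proof.
  intros Hp; unfold dS; apply (epsilon_spec (inhabits 0) (fun d => (A p -> d = _) /\ (~ A p -> d = _))); auto.
  exists (- dist_set p (boundary A)); split; [intros; contradiction | auto].
Qed.

Definition vcontinuous_at {n : nat} (g : vec n -> R) (p : vec n) : Prop :=
  forall eta, 0 < eta -> exists r, 0 < r /\ forall q, vdist p q < r -> Rabs (g q - g p) < eta.

Section SignedDistance.
Variable n : nat.
Hypothesis Hn : (1 <= n)%nat.
Variable A : set n.
Hypothesis HA : in_Jn A.
Hypothesis HAne : nonempty A.
Variable M : R.
Hypothesis HM : forall p, A p -> vnorm p <= M.

Lemma boundary_bounded e : boundary A e -> vnorm e <= M.
Proof. intros [He _]; exact (closure_bounded n A M HM e He). Qed.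

Lemma boundary_min_dist p : is_min_dist p (boundary A) (dist_set p (boundary A)).
Proof.
  apply (dist_attained n (boundary A) M (boundary_closed n A) boundary_bounded).
  exact (boundary_nonempty n A M Hn HAne HM).
Qed.

Lemma radius_nonneg : 0 <= M.
Proof. destruct HAne as [p Hp]; pose proof (HM p Hp); pose proof (vnorm_ge0 n p); lra. Qed.

Lemma dS_far p : M < vnorm p -> vnorm p - M <= - dS p A <= vnorm p + M.
Proof.
  intros Hp; assert (~ A p) by (intros H; pose proof (HM p H); lra).
  rewrite dS_out by auto; pose proof (dist_bounds n _ boundary_min_dist M boundary_bounded p); lra.
Qed.

(* [dS] is continuous: near an interior point or an exterior point it is [+/-] a 1-Lipschitz
   distance function, and at a boundary point it vanishes and [|dS q| <= vdist p q]. *)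
Lemma dS_continuous p : vcontinuous_at (fun q => dS q A) p.
Proof.
  intros eta He; cbv beta; destruct HA as [_ [Hci _]].
  pose proof (dist_lipschitz_abs n _ boundary_min_dist p) as Hlip.
  destruct (classic (A p)) as [Hp|Hp]; [destruct (classic (interior A p)) as [[r0 [Hr0 Hint]]|Hnint]|].
  - exists (Rmin r0 eta); split; [apply Rmin_glb_lt; auto|]; intros q Hq.
    pose proof (Rmin_l r0 eta); pose proof (Rmin_r r0 eta); pose proof (Hlip q).
    rewrite !dS_in by (auto; apply Hint; lra); lra.
  - assert (Hb : boundary A p) by (split; [apply sub_closure|]; auto).
    exists eta; split; auto; intros q Hq.
    rewrite (dS_in n A p Hp), (dist_zero n _ boundary_min_dist p Hb), Rminus_0_r.
    pose proof (dist_nonneg n _ boundary_min_dist q) as Hq0; pose proof (Hlip q) as Hq1.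
    rewrite (dist_zero n _ boundary_min_dist p Hb), Rminus_0_r, Rabs_right in Hq1 by lra.
    destruct (classic (A q)); [rewrite dS_in by auto | rewrite dS_out by auto]; apply Rabs_def1; lra.
  - destruct (ci_complement_open n A Hci p Hp) as [r0 [Hr0 Hext]].
    exists (Rmin r0 eta); split; [apply Rmin_glb_lt; auto|]; intros q Hq.
    pose proof (Rmin_l r0 eta); pose proof (Rmin_r r0 eta); pose proof (Hlip q).
    rewrite !dS_out by (auto; apply Hext; lra).
    rewrite <- Rabs_Ropp; apply Rle_lt_trans with (vdist p q); [|lra].
    replace (- (- dist_set q (boundary A) - - dist_set p (boundary A)))
      with (dist_set q (boundary A) - dist_set p (boundary A)) by ring; auto.
Qed.
End SignedDistance.

(** ** Open sets and limit points of families of sets *)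

Definition open_set {n : nat} (W : set n) : Prop :=
  forall p, W p -> exists r, 0 < r /\ forall q, vdist p q < r -> W q.

Lemma common_radius n (P : Fin.t n -> R -> Prop) :
  (forall i r r', P i r -> 0 < r' <= r -> P i r') -> (forall i, exists r, 0 < r /\ P i r) ->
  exists r, 0 < r /\ forall i, P i r.
Proof.
  revert P; induction n as [|n IH]; intros P Hdown H.
  - exists 1; split; [lra|]; intros i; exact (Fin.case0 (fun i => P i 1) i).
  - destruct (IH (fun i => P (Fin.FS i))) as [r1 [Hr1 H1]]; [intros; eapply Hdown; eauto | intros; apply H|].
    destruct (H Fin.F1) as [r0 [Hr0 H0]].
    pose proof (Rmin_l r0 r1); pose proof (Rmin_r r0 r1); pose proof (Rmin_glb_lt r0 r1 0 Hr0 Hr1).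
    exists (Rmin r0 r1); split; [lra|]; intros i.
    apply (Fin.caseS' i (fun i => P i (Rmin r0 r1))); [|intros j]; eapply Hdown; eauto; lra.
Qed.

Lemma open_box_open n (a b : vec n) : open_set (in_open_box a b).
Proof.
  intros p Hp.
  destruct (common_radius n (fun i r => a i < p i - r /\ p i + r < b i)) as [r [Hr H]].
  - intros i r r' [H1 H2] [H3 H4]; split; lra.
  - intros i; specialize (Hp i); exists (Rmin (p i - a i) (b i - p i) / 2).
    pose proof (Rmin_l (p i - a i) (b i - p i)); pose proof (Rmin_r (p i - a i) (b i - p i)).
    pose proof (Rmin_glb_lt (p i - a i) (b i - p i) 0 ltac:(lra) ltac:(lra)); repeat split; lra.
  - exists r; split; auto; intros q Hq i; specialize (H i).
    pose proof (Rabs_le_between _ _ (coord_dist n p q i)); lra.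
Qed.

Section FamilyLimit.
Variable n : nat.
Variable F : R -> set n.
Variable xs Rb : R.
Hypothesis HFbounded : forall x p, Rabs (x - xs) < 1 -> F x p -> vnorm p <= Rb.

Definition limit_point (p : vec n) : Prop :=
  forall eta, 0 < eta -> exists x q, Rabs (x - xs) < eta /\ vdist p q < eta /\ F x q.

(* If all limit points lie in an open set [W], then [F x] lies in [W] for [x] near [xs]:
   otherwise a bad point of each [F (x_k)], [x_k -> xs], would cluster outside [W]. *)
Lemma eventually_inside (W : set n) : open_set W -> (forall p, limit_point p -> W p) ->
  exists delta, 0 < delta /\ forall x p, Rabs (x - xs) < delta -> F x p -> W p.
Proof.
  intros HW Hlim; apply NNPP; intros Hno.
  assert (Hk : forall k, exists xp : R * vec n,
    Rabs (fst xp - xs) < / (INR k + 1) /\ F (fst xp) (snd xp) /\ ~ W (snd xp)).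
  { intros k; assert (Hpos : 0 < / (INR k + 1)) by (apply Rinv_0_lt_compat; pose proof (pos_INR k); lra).
    apply NNPP; intros Hc; apply Hno; exists (/ (INR k + 1)); split; auto; intros x p Hx HF.
    apply NNPP; intros HnW; apply Hc; exists (x, p); auto. }
  destruct (choice _ Hk) as [u Hu].
  assert (Hle1 : forall k : nat, / (INR k + 1) <= 1).
  { intros k; rewrite <- Rinv_1; apply Rinv_le_contravar; [lra | pose proof (pos_INR k); lra]. }
  destruct (bounded_cluster_point n (fun k => snd (u k)) Rb) as [p Hp].
  { intros k; destruct (Hu k) as [H1 [H2 _]]; apply (HFbounded (fst (u k))); auto.
    specialize (Hle1 k); lra. }
  assert (HWp : W p).
  { apply Hlim; intros eta He; destruct (inv_succ_small eta He) as [N HN].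
    destruct (Hp eta He N) as [k [Hk1 Hk2]]; destruct (Hu k) as [H1 [H2 _]].
    exists (fst (u k)), (snd (u k)); repeat split; auto; eapply Rlt_trans; eauto. }
  destruct (HW p HWp) as [r [Hr Hball]]; destruct (Hp r Hr 0%nat) as [k [_ Hpk]].
  exact (proj2 (proj2 (Hu k)) (Hball _ Hpk)).
Qed.

Lemma mu_limsup (G : set n) : (exists s, cover_sum G s) -> (forall p, limit_point p -> G p) ->
  forall eps, 0 < eps -> exists delta, 0 < delta /\ forall x, Rabs (x - xs) < delta -> mu (F x) <= mu G + eps.
Proof.
  intros HG Hlim eps Heps.
  destruct (mu_open_approx n G HG eps Heps) as [a [b [s [Hcov [Hs Hsle]]]]].
  set (W := fun p => exists k, in_open_box (a k) (b k) p).
  assert (HW : open_set W).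
  { intros p [k Hk]; destruct (open_box_open n (a k) (b k) p Hk) as [r [Hr Hball]].
    exists r; split; auto; intros q Hq; exists k; auto. }
  destruct (eventually_inside W HW (fun p Hp => Hcov p (Hlim p Hp))) as [delta [Hd Hev]].
  exists delta; split; auto; intros x Hx.
  assert (Hcover : cover_sum (F x) s).
  { exists a, b; split; auto; intros p Hp; destruct (Hev x p Hx Hp) as [k Hk].
    exists k; intros i; specialize (Hk i); lra. }
  pose proof (mu_le_cover n (F x) s Hcover); lra.
Qed.
End FamilyLimit.

(** ** Continuity of the measure of the distance average *)

Lemma affine_combination_continuous n (g h : vec n -> R) xs p :
  vcontinuous_at g p -> vcontinuous_at h p -> forall eps, 0 < eps ->
  exists eta, 0 < eta /\ forall x q, Rabs (x - xs) < eta -> vdist p q < eta ->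
    Rabs (x * g q + (1 - x) * h q - (xs * g p + (1 - xs) * h p)) < eps.
Proof.
  intros Hg Hh eps Heps.
  set (c := Rabs xs + Rabs (1 - xs) + 1); set (K := Rabs (g p) + Rabs (h p) + 2).
  pose proof (Rabs_pos xs); pose proof (Rabs_pos (1 - xs)); pose proof (Rabs_pos (g p)); pose proof (Rabs_pos (h p)).
  set (e1 := Rmin 1 (eps / (2 * c))).
  assert (He1 : 0 < e1) by (apply Rmin_glb_lt; [lra | apply Rdiv_lt_0_compat; unfold c; lra]).
  assert (Hce1 : (Rabs xs + Rabs (1 - xs)) * e1 < eps / 2).
  { apply Rle_lt_trans with (c * e1 - e1); [unfold c; nra|].
    assert (c * e1 <= eps / 2); [|lra].
    apply Rle_trans with (c * (eps / (2 * c))); [apply Rmult_le_compat_l; [unfold c; lra | apply Rmin_r]|].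
    right; field; unfold c; lra. }
  destruct (Hg e1 He1) as [rg [Hrg Hgc]]; destruct (Hh e1 He1) as [rh [Hrh Hhc]].
  assert (HK : 0 < eps / (2 * K)) by (apply Rdiv_lt_0_compat; unfold K; lra).
  exists (Rmin rg (Rmin rh (eps / (2 * K)))); split; [repeat apply Rmin_glb_lt; auto|].
  intros x q Hx Hq.
  pose proof (Rmin_l rg (Rmin rh (eps / (2 * K)))); pose proof (Rmin_r rg (Rmin rh (eps / (2 * K)))).
  pose proof (Rmin_l rh (eps / (2 * K))); pose proof (Rmin_r rh (eps / (2 * K))).
  specialize (Hgc q ltac:(lra)); specialize (Hhc q ltac:(lra)).
  assert (e1 <= 1) by apply Rmin_l.
  replace (x * g q + (1 - x) * h q - (xs * g p + (1 - xs) * h p))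
    with ((x - xs) * (g q - h q) + (xs * (g q - g p) + (1 - xs) * (h q - h p))) by ring.
  assert (T1 : Rabs ((x - xs) * (g q - h q)) <= eps / (2 * K) * K).
  { apply Rabs_mult_le; [lra|]; unfold Rminus; eapply Rle_trans; [apply Rabs_triang|].
    rewrite Rabs_Ropp; pose proof (Rabs_triang_inv (g q) (g p)); pose proof (Rabs_triang_inv (h q) (h p)).
    unfold K; lra. }
  replace (eps / (2 * K) * K) with (eps / 2) in T1 by (field; unfold K; lra).
  assert (T2 : Rabs (xs * (g q - g p) + (1 - xs) * (h q - h p)) <= (Rabs xs + Rabs (1 - xs)) * e1).
  { eapply Rle_trans; [apply Rabs_triang|].
    pose proof (Rabs_mult_le xs (g q - g p) (Rabs xs) e1 (Rle_refl _) ltac:(lra)).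
    pose proof (Rabs_mult_le (1 - xs) (h q - h p) (Rabs (1 - xs)) e1 (Rle_refl _) ltac:(lra)); lra. }
  eapply Rle_lt_trans; [apply Rabs_triang | lra].
Qed.

Section DistanceAverage.
Variable n : nat.
Hypothesis Hn : (1 <= n)%nat.
Variables A B : set n.
Hypothesis HA : in_Jn A.
Hypothesis HB : in_Jn B.
Hypothesis HAne : nonempty A.
Hypothesis HBne : nonempty B.
Variable M : R.
Hypothesis HMA : forall p, A p -> vnorm p <= M.
Hypothesis HMB : forall p, B p -> vnorm p <= M.

(* Far from the origin both signed distances are very negative, so [f_ABx A B x] is negative
   outside a ball whose radius depends on [|x|]. *)
Lemma f_nonneg_bounded x p : 0 <= f_ABx A B x p -> vnorm p <= M + 2 * M * Rabs x.
Proof.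
  intros Hf; pose proof (radius_nonneg n A HAne M HMA); pose proof (Rabs_pos x).
  destruct (Rle_dec (vnorm p) M) as [|Hfar]; [nra|]; apply Rnot_le_lt in Hfar.
  pose proof (dS_far n Hn A HAne M HMA p Hfar); pose proof (dS_far n Hn B HBne M HMB p Hfar).
  assert (Hd : Rabs (dS p A - dS p B) <= 2 * M) by (apply Rabs_le; lra).
  pose proof (Rle_abs (x * (dS p A - dS p B))).
  pose proof (Rabs_mult_le x _ (Rabs x) (2 * M) (Rle_refl _) Hd).
  unfold f_ABx in Hf; nra.
Qed.

Lemma avg_has_cover x : exists s, cover_sum (dist_avg A B x) s.
Proof. apply (bounded_has_cover n _ (M + 2 * M * Rabs x) Hn); intros p Hp; apply f_nonneg_bounded, Hp. Qed.

Variable xs : R.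

Lemma f_nonneg_bounded_near x p : Rabs (x - xs) < 1 -> 0 <= f_ABx A B x p -> vnorm p <= M + 2 * M * (Rabs xs + 1).
Proof.
  intros Hx Hf; pose proof (f_nonneg_bounded x p Hf); pose proof (radius_nonneg n A HAne M HMA).
  pose proof (Rabs_triang (x - xs) xs); replace (x - xs + xs) with x in * by ring; nra.
Qed.

Lemma f_joint_continuous p : forall eps, 0 < eps -> exists eta, 0 < eta /\
  forall x q, Rabs (x - xs) < eta -> vdist p q < eta -> Rabs (f_ABx A B x q - f_ABx A B xs p) < eps.
Proof.
  apply affine_combination_continuous.
  - exact (dS_continuous n Hn A HA HAne M HMA p).
  - exact (dS_continuous n Hn B HB HBne M HMB p).
Qed.

Lemma limit_nonneg p : (forall eta, 0 < eta -> exists x q,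
  Rabs (x - xs) < eta /\ vdist p q < eta /\ 0 <= f_ABx A B x q) -> 0 <= f_ABx A B xs p.
Proof.
  intros Hlim; apply Rnot_lt_le; intros Hneg.
  destruct (f_joint_continuous p (- f_ABx A B xs p) ltac:(lra)) as [eta [Heta Hc]].
  destruct (Hlim eta Heta) as [x [q [Hx [Hq Hf]]]].
  pose proof (Rabs_def2 _ _ (Hc x q Hx Hq)); lra.
Qed.

Lemma limit_nonpos p : (forall eta, 0 < eta -> exists x q,
  Rabs (x - xs) < eta /\ vdist p q < eta /\ f_ABx A B x q < 0) -> f_ABx A B xs p <= 0.
Proof.
  intros Hlim; apply Rnot_lt_le; intros Hpos.
  destruct (f_joint_continuous p (f_ABx A B xs p) Hpos) as [eta [Heta Hc]].
  destruct (Hlim eta Heta) as [x [q [Hx [Hq Hf]]]].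
  pose proof (Rabs_def2 _ _ (Hc x q Hx Hq)); lra.
Qed.

(* Upper semicontinuity of [x |-> mu (dist_avg A B x)] at [xs]: the limit points of the
   distance averages [dist_avg A B x], [x -> xs], lie in [dist_avg A B xs]. *)
Lemma avg_measure_usc eps : 0 < eps -> exists delta, 0 < delta /\
  forall x, Rabs (x - xs) < delta -> mu (dist_avg A B x) <= mu (dist_avg A B xs) + eps.
Proof.
  apply (mu_limsup n (dist_avg A B) xs _ f_nonneg_bounded_near _ (avg_has_cover xs)).
  intros p Hp; apply limit_nonneg, Hp.
Qed.

(* Lower semicontinuity at [xs] when [Omega A B xs] is null: the points of [dist_avg A B xs]
   missing from [dist_avg A B x] only accumulate on [Omega A B xs] as [x -> xs]. *)
Lemma avg_measure_lsc : mu (Omega A B xs) = 0 -> forall eps, 0 < eps -> exists delta, 0 < delta /\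
  forall x, Rabs (x - xs) < delta -> mu (dist_avg A B xs) <= mu (dist_avg A B x) + eps.
Proof.
  intros HOm eps Heps.
  set (Lost := fun x p => dist_avg A B xs p /\ ~ dist_avg A B x p).
  assert (HOcover : exists s, cover_sum (Omega A B xs) s).
  { destruct (avg_has_cover xs) as [s Hs]; exists s; apply (cover_sum_mono n _ (dist_avg A B xs) s); auto.
    intros p Hp; unfold Omega in Hp; unfold dist_avg; lra. }
  destruct (mu_limsup n Lost xs (M + 2 * M * (Rabs xs + 1))) with (G := Omega A B xs) (eps := eps)
    as [delta [Hd Hlost]]; auto.
  - intros x p _ [Hp _]; apply (f_nonneg_bounded_near xs); [rewrite Rminus_diag, Rabs_R0; lra | exact Hp].
  - intros p Hp; apply Rle_antisym.
    + apply limit_nonpos; intros eta He; destruct (Hp eta He) as [x [q [Hx [Hq [_ Hout]]]]].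
      exists x, q; repeat split; auto; apply Rnot_le_lt, Hout.
    + apply limit_nonneg; intros eta He; destruct (Hp eta He) as [x [q [Hx [Hq [Hin _]]]]].
      exists xs, q; rewrite Rminus_diag, Rabs_R0; repeat split; auto.
  - exists delta; split; auto; intros x Hx.
    assert (Hsplit : mu (dist_avg A B xs) <= mu (dist_avg A B x) + mu (Lost x)).
    { apply mu_subadditive; [apply avg_has_cover| |].
      - destruct (avg_has_cover xs) as [s Hs]; exists s; apply (cover_sum_mono n _ (dist_avg A B xs) s); auto.
        intros p [Hp _]; exact Hp.
      - intros p Hp; destruct (classic (dist_avg A B x p)); [left | right]; unfold Lost; auto. }
    specialize (Hlost x Hx); rewrite HOm in Hlost; lra.
Qed.
End DistanceAverage.

Lemma Jn_common_bound n (A B : set n) : in_Jn A -> in_Jn B ->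
  exists M, (forall p, A p -> vnorm p <= M) /\ (forall p, B p -> vnorm p <= M).
Proof.
  intros [[MA HMA] _] [[MB HMB] _]; exists (Rmax MA MB); split; intros p Hp.
  - eapply Rle_trans; [apply HMA, Hp | apply Rmax_l].
  - eapply Rle_trans; [apply HMB, Hp | apply Rmax_r].
Qed.

Theorem mainTheorem4 (n : nat) (Hn : (1 <= n)%nat) (A B : set n)
  (HA : in_Jn A) (HB : in_Jn B) (HAne : nonempty A) (HBne : nonempty B)
  (HBA : forall p, B p -> A p) (xs : R)
  (HOm : mu (Omega A B xs) = 0) :
  continuity_pt (fun x => mu (dist_avg A B x)) xs.
Proof.
  destruct (Jn_common_bound n A B HA HB) as [M [HMA HMB]].
  intros eps Heps.
  destruct (avg_measure_usc n Hn A B HA HB HAne HBne M HMA HMB xs (eps / 2) ltac:(lra)) as [d1 [Hd1 Hup]].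
  destruct (avg_measure_lsc n Hn A B HA HB HAne HBne M HMA HMB xs HOm (eps / 2) ltac:(lra)) as [d2 [Hd2 Hlow]].
  exists (Rmin d1 d2); split; [apply Rmin_glb_lt; auto|].
  intros x [_ Hx]; simpl in *; unfold Rdist in *.
  pose proof (Rmin_l d1 d2); pose proof (Rmin_r d1 d2).
  specialize (Hup x ltac:(lra)); specialize (Hlow x ltac:(lra)).
  apply Rabs_def1; lra.
Qed.
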